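(* If Algorithm 1 is run for any integer $T\ge\frac{6w}{\alpha\epsilon}$ iterations and $\bar y=\frac1T\sum_{k=0}^{T-1}p(x_k)$, then $\mathbb{E}[\mathbf 1^T\bar y]\le(1+5\epsilon)\,\mathrm{OPT}$.
   Context: Standing setup: $A\in\mathbb{R}^{m\times n}_{\ge 0}$ has no zero column and is normalized so that $\min_{i\in[n]}\|A_{:i}\|_\infty=1$, where $A_{:i}$ denotes the $i$-th column. The packing LP is $\max\{\mathbf 1^Tx: x\ge 0,\ Ax\le \mathbf 1\}$ with optimal value $\mathrm{OPT}$. $\epsilon\in(0,1/2]$. $\log$ is natural unless written $\log_2$. $\mu=\frac{\epsilon}{4\log(nm/\epsilon)}$, $p_j(x)=\exp\big(\frac{1}{\mu}((Ax)_j-1)\big)$, $p(x)=(p_1(x),\dots,p_m(x))$, $f_\mu(x)=-\mathbf 1^Tx+\mu\sum_jp_j(x)$, $\nabla_i f_\mu(x)=-1+\sum_jA_{ji}p_j(x)$. Algorithm 1 with $T$ iterations: set $\alpha=\mu/20$, $w=\lceil\log_2(1/\epsilon)\rceil$, $x_0[i]=\frac{1-\epsilon/2}{n\|A_{:i}\|_\infty}$. For $k=0,\dots,T-1$: choose $t_k\in\{0,\dots,w-1\}$ uniformly at random, independently of the past; writing $g_i=\nabla_i f_\mu(x_k)$, define $\xi_k[i]=0$ if $|g_i|\le\epsilon$, $\xi_k[i]=g_i$ if $\epsilon<|g_i|\le 1$, $\xi_k[i]=1$ if $g_i>1$; $\xi^{(t)}_k[i]=\xi_k[i]$ if $\epsilon2^t<|\xi_k[i]|\le\epsilon2^{t+1}$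 and $0$ otherwise; $x_{k+1}[i]=x_k[i]\exp(-\alpha\,\xi^{(t_k)}_k[i])$. *)

From Stdlib Require Import Reals Lra ZArith.
Open Scope R_scope.

Fixpoint sumR (f : nat -> R) (k : nat) : R :=
  match k with
  | O => 0
  | S k' => sumR f k' + f k'
  end.

Fixpoint maxR (f : nat -> R) (k : nat) : R :=
  match k with
  | O => 0
  | S k' => Rmax (maxR f k') (f k')
  end.

(* A matrix is a function A j i (row j < m, column i < n); vectors are nat -> R. *)

Definition colnorm (m : nat) (A : nat -> nat -> R) (i : nat) : R :=
  maxR (fun j => Rabs (A j i)) m.

Definition Ax (n : nat) (A : nat -> nat -> R) (x : nat -> R) (j : nat) : R :=
  sumR (fun i => A j i * x i) n.

(* ceiling of a real: ceil x = - floor(-x) = 1 - up(-x) *)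
Definition ceilZ (x : R) : Z := (1 - up (- x))%Z.

Definition log2 (x : R) : R := ln x / ln 2.

Section Alg.
Variables (m n : nat) (A : nat -> nat -> R) (eps : R).

Definition mu : R := eps / (4 * ln (INR n * INR m / eps)).
Definition alpha : R := mu / 20.
Definition wpar : nat := Z.to_nat (ceilZ (log2 (1 / eps))).

Definition pj (x : nat -> R) (j : nat) : R := exp ((1 / mu) * (Ax n A x j - 1)).

Definition grad (x : nat -> R) (i : nat) : R :=
  -1 + sumR (fun j => A j i * pj x j) m.

Definition xi (x : nat -> R) (i : nat) : R :=
  let g := grad x i in
  if Rle_dec (Rabs g) eps then 0
  else if Rle_dec g 1 then g
  else 1.

Definition xit (t : nat) (x : nat -> R) (i : nat) : R :=
  let v := xi x i in
  if Rlt_dec (eps * 2 ^ t) (Rabs v) then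
    (if Rle_dec (Rabs v) (eps * 2 ^ (S t)) then v else 0)
  else 0.

Definition x0 (i : nat) : R := (1 - eps / 2) / (INR n * colnorm m A i).

Definition step (t : nat) (x : nat -> R) (i : nat) : R :=
  x i * exp (- alpha * xit t x i).

Fixpoint iterate (ts : nat -> nat) (k : nat) : nat -> R :=
  match k with
  | O => x0
  | S k' => step (ts k') (iterate ts k')
  end.

Definition ones_ybar (T : nat) (ts : nat -> nat) : R :=
  (1 / INR T) * sumR (fun k => sumR (fun j => pj (iterate ts k) j) m) T.

End Alg.

(* Expectation over t_0, ..., t_{T-1} i.i.d. uniform on {0,...,w-1}.
   expect w T F averages F over all choices of the first T values. *)
Definition shift_cons (t : nat) (ts : nat -> nat) : nat -> nat :=
  fun k => match k with O => t | S k' => ts k' end.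

Fixpoint expect (w T : nat) (F : (nat -> nat) -> R) : R :=
  match T with
  | O => F (fun _ => O)
  | S T' => (1 / INR w) * sumR (fun t => expect w T' (fun ts => F (shift_cons t ts))) w
  end.

Definition feasible (m n : nat) (A : nat -> nat -> R) (x : nat -> R) : Prop :=
  (forall i, (i < n)%nat -> 0 <= x i) /\
  (forall j, (j < m)%nat -> Ax n A x j <= 1).

Definition lp_values (m n : nat) (A : nat -> nat -> R) : R -> Prop :=
  fun r => exists x, feasible m n A x /\ r = sumR x n.

(* Along the run the potential f_mu(x) = - 1^T x + mu 1^T p(x) never increases: a
   step moves it by at most -(3/4) alpha sum_i x_i xi^(t)_i g_i <= 0.  Hence every iterate stays
   in the region f_mu <= 0, where (Ax)_j <= 1 + 4 eps/3 and so 1^T x <= (1 + 4 eps/3) OPT.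
   Pointwise, (1 - eps/4) 1^T p(x) <= (1 + eps) 1^T x + sum_i x_i xi_i + sum_i x_i xi_i g_i + eps^2/2.
   Averaged over the uniform band t, f_mu drops by (3 alpha / 4w) sum_i x_i xi_i g_i and 1^T x by
   (alpha / w) (sum_i x_i xi_i - alpha 1^T x); telescoping over the T steps bounds the expected sums
   of these two terms by O(w / alpha) OPT <= eps T OPT / 6, which gives the claim after dividing
   by T. *)

From Pilot Require Import Defs.
From Stdlib Require Import Reals Lra Lia ZArith.
From Coquelicot Require Import Rcomplements.
Open Scope R_scope.

Lemma sumR_S f N : sumR f (S N) = sumR f N + f N.
Proof. reflexivity. Qed.

Lemma sumR_ext f g N : (forall k, (k < N)%nat -> f k = g k) -> sumR f N = sumR g N.
Proof.
  induction N as [|N IH]; intros H; simpl; [reflexivity|].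
  rewrite IH by (intros; apply H; lia). rewrite H by lia. reflexivity.
Qed.

Lemma sumR_le f g N : (forall k, (k < N)%nat -> f k <= g k) -> sumR f N <= sumR g N.
Proof.
  induction N as [|N IH]; intros H; simpl; [lra|].
  apply Rplus_le_compat; [apply IH; intros; apply H|apply H]; lia.
Qed.

Lemma sumR_plus f g N : sumR (fun k => f k + g k) N = sumR f N + sumR g N.
Proof. induction N; simpl; lra. Qed.

Lemma sumR_minus f g N : sumR (fun k => f k - g k) N = sumR f N - sumR g N.
Proof. induction N; simpl; lra. Qed.

Lemma sumR_scal c f N : sumR (fun k => c * f k) N = c * sumR f N.
Proof. induction N; simpl; [|rewrite IHN]; ring. Qed.

Lemma sumR_const c N : sumR (fun _ => c) N = INR N * c.
Proof. induction N; [simpl; ring|]. rewrite S_INR; simpl sumR; rewrite IHN; ring. Qed.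

Lemma sumR_nonneg f N : (forall k, (k < N)%nat -> 0 <= f k) -> 0 <= sumR f N.
Proof. intros H. rewrite <- (Rmult_0_r (INR N)), <- sumR_const. now apply sumR_le. Qed.

Lemma sumR_swap (F : nat -> nat -> R) N M :
  sumR (fun i => sumR (fun j => F i j) M) N = sumR (fun j => sumR (fun i => F i j) N) M.
Proof.
  induction N as [|N IH]; simpl.
  - rewrite sumR_const; ring.
  - rewrite IH, <- sumR_plus; reflexivity.
Qed.

Lemma sumR_term_le f N k :
  (forall k, (k < N)%nat -> 0 <= f k) -> (k < N)%nat -> f k <= sumR f N.
Proof.
  induction N as [|N IH]; intros H Hk; [lia|]; simpl.
  assert (0 <= sumR f N) by (apply sumR_nonneg; intros; apply H; lia).
  destruct (Nat.eq_dec k N) as [->|Hne]; [lra|].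
  assert (f k <= sumR f N) by (apply IH; [intros; apply H|]; lia).
  assert (0 <= f N) by (apply H; lia). lra.
Qed.

Lemma sumR_indicator c k N :
  (k < N)%nat -> sumR (fun i => if Nat.eq_dec i k then c else 0) N = c.
Proof.
  induction N as [|N IH]; intros Hk; [lia|]; simpl.
  destruct (Nat.eq_dec N k) as [->|Hne].
  - rewrite (sumR_ext _ (fun _ => 0)), sumR_const; [ring|].
    intros i Hi; destruct (Nat.eq_dec i k); [lia|reflexivity].
  - rewrite IH by lia; ring.
Qed.

(* Cauchy-Schwarz by induction: the step is AM-GM, 2 b D <= S b^2 + Q whenever D^2 <= S Q. *)
Lemma sumR_sq_le a b N : (forall i, (i < N)%nat -> 0 <= a i) ->
  (sumR (fun i => a i * b i) N)^2 <= sumR a N * sumR (fun i => a i * b i ^ 2) N.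
Proof.
  induction N as [|N IH]; intros Ha; [simpl; lra|]; rewrite !sumR_S.
  set (S := sumR a N); set (D := sumR (fun i => a i * b i) N);
  set (Q := sumR (fun i => a i * b i ^ 2) N).
  assert (HD : D ^ 2 <= S * Q) by (apply IH; intros; apply Ha; lia).
  assert (HS : 0 <= S) by (apply sumR_nonneg; intros; apply Ha; lia).
  assert (HQ : 0 <= Q).
  { apply sumR_nonneg; intros; apply Rmult_le_pos; [apply Ha; lia|apply pow2_ge_0]. }
  assert (HaN : 0 <= a N) by (apply Ha; lia).
  assert (Hamgm : 2 * b N * D <= S * b N ^ 2 + Q).
  { assert (0 <= (S * b N ^ 2 - Q) ^ 2) by apply pow2_ge_0.
    assert (0 <= S * b N ^ 2 + Q) by nra. nra. }
  assert (a N * (2 * b N * D) <= a N * (S * b N ^ 2 + Q)) by (apply Rmult_le_compat_l; lra).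
  nra.
Qed.

Lemma sumR_mul_Ax m n (A : nat -> nat -> R) (c y : nat -> R) :
  sumR (fun j => c j * Ax n A y j) m = sumR (fun i => y i * sumR (fun j => A j i * c j) m) n.
Proof.
  unfold Ax. transitivity (sumR (fun j => sumR (fun i => c j * (A j i * y i)) n) m).
  - apply sumR_ext; intros; now rewrite sumR_scal.
  - rewrite sumR_swap. apply sumR_ext; intros. rewrite <- sumR_scal.
    apply sumR_ext; intros; ring.
Qed.

Lemma maxR_ge f N k : (k < N)%nat -> f k <= maxR f N.
Proof.
  induction N as [|N IH]; intros Hk; [lia|]; simpl.
  destruct (Nat.eq_dec k N) as [->|]; [apply Rmax_r|].
  eapply Rle_trans; [apply IH; lia|apply Rmax_l].
Qed.

Lemma maxR_attain f N : 0 < maxR f N -> exists k, (k < N)%nat /\ f k = maxR f N.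
Proof.
  induction N as [|N IH]; simpl; intros H; [lra|].
  unfold Rmax in H |- *. destruct (Rle_dec (maxR f N) (f N)).
  - exists N; split; auto.
  - destruct (IH H) as [k [Hk E]]; exists k; split; auto.
Qed.

Lemma exp_le_exp x y : x <= y -> exp x <= exp y.
Proof. intros [H| ->]; [left; now apply exp_increasing|right; reflexivity]. Qed.

Lemma exp_mul_one_sub_le y : exp y * (1 - y) <= 1.
Proof.
  assert (H := exp_ineq1_le (- y)). rewrite exp_Ropp in H.
  assert (Hy := exp_pos y).
  apply Rle_trans with (exp y * / exp y); [apply Rmult_le_compat_l; lra|].
  rewrite Rinv_r; lra.
Qed.

Lemma exp_le_quad y : y <= 1 / 4 -> exp y <= 1 + y + y ^ 2.
Proof.
  intros Hy. destruct (Rle_dec y 0) as [Hneg|Hpos].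
  - assert (H := exp_mul_one_sub_le y).
    assert (0 <= - y * y ^ 2) by (apply Rmult_le_pos; [lra|apply pow2_ge_0]).
    apply (Rmult_le_reg_r (1 - y)); [lra|].
    replace ((1 + y + y ^ 2) * (1 - y)) with (1 - y * y ^ 2) by ring. lra.
  - (* exp y = exp (y/2)^2 <= 1/(1 - y/2)^2, and (1 + y + y^2)(1 - y/2)^2 >= 1 on [0, 1/4]. *)
    assert (H := exp_mul_one_sub_le (y / 2)). assert (He := exp_pos (y / 2)).
    replace y with (y / 2 + y / 2) at 1 by field. rewrite exp_plus.
    assert (H2 : exp (y / 2) * exp (y / 2) * (1 - y / 2) ^ 2 <= 1).
    { assert (0 <= exp (y / 2) * (1 - y / 2)) by nra. nra. }
    apply (Rmult_le_reg_r ((1 - y / 2) ^ 2)); [nra|].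
    assert (0 <= y ^ 2 * (1 - 3 * y + y ^ 2)) by (apply Rmult_le_pos; nra).
    nra.
Qed.

Lemma mul_exp_neg_le1 y : y * exp (- y) <= 1.
Proof.
  assert (H := exp_ineq1_le y). assert (He := exp_pos (- y)).
  apply Rle_trans with (exp y * exp (- y)); [apply Rmult_le_compat_r; lra|].
  rewrite <- exp_plus, Rplus_opp_r, exp_0; lra.
Qed.

Lemma ln_le_sub1 x : 0 < x -> ln x <= x - 1.
Proof. intros Hx. assert (H := exp_ineq1_le (ln x)). rewrite exp_ln in H; lra. Qed.

Lemma exp_increment_le p D D2 c mu :
  0 <= p -> 0 < mu -> D <= mu / 4 -> D ^ 2 <= c * D2 ->
  mu * (p * exp (D / mu) - p) <= p * D + c / mu * (p * D2).
Proof.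
  intros Hp Hmu HD HD2.
  assert (He : exp (D / mu) <= 1 + D / mu + (D / mu) ^ 2)
    by (apply exp_le_quad; apply (Rmult_le_reg_r mu); [lra|]; field_simplify; lra).
  assert (H : mu * (p * exp (D / mu) - p) <= p * D + p * D ^ 2 / mu).
  { apply Rle_trans with (mu * (p * (D / mu + (D / mu) ^ 2))).
    - apply Rmult_le_compat_l; nra.
    - right; field; lra. }
  assert (p * D ^ 2 / mu <= c / mu * (p * D2)).
  { replace (c / mu * (p * D2)) with (p * (c * D2) / mu) by (field; lra).
    apply Rmult_le_compat_r; [left; apply Rinv_0_lt_compat; lra|].
    apply Rmult_le_compat_l; lra. }
  lra.
Qed.

Fixpoint trajectory {St : Type} (stepf : nat -> St -> St) (y : St) (ts : nat -> nat) (k : nat) : St :=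
  match k with
  | O => y
  | S k' => stepf (ts k') (trajectory stepf y ts k')
  end.

Lemma trajectory_shift_cons {St : Type} (stepf : nat -> St -> St) y t ts k :
  trajectory stepf y (shift_cons t ts) (S k) = trajectory stepf (stepf t y) ts k.
Proof. induction k as [|k IH]; simpl in *; [|rewrite IH]; reflexivity. Qed.

Section Expectation.
Variable w : nat.
Hypothesis w_pos : (0 < w)%nat.

Lemma expect_S T F : expect w (S T) F =
  1 / INR w * sumR (fun t => expect w T (fun ts => F (shift_cons t ts))) w.
Proof. reflexivity. Qed.

Lemma expect_ext T F G : (forall ts, F ts = G ts) -> expect w T F = expect w T G.
Proof.
  revert F G; induction T as [|T IH]; intros F G H; simpl; [apply H|].
  f_equal; apply sumR_ext; intros; apply IH; intros; apply H.
Qed.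

Lemma expect_le T F G : (forall ts, F ts <= G ts) -> expect w T F <= expect w T G.
Proof.
  revert F G; induction T as [|T IH]; intros F G H; simpl; [apply H|].
  apply Rmult_le_compat_l; [apply Rdiv_le_0_compat; [lra|apply lt_0_INR; lia]|].
  apply sumR_le; intros; apply IH; intros; apply H.
Qed.

Lemma expect_const T c : expect w T (fun _ => c) = c.
Proof.
  assert (Hw : 0 < INR w) by (apply lt_0_INR; lia).
  induction T as [|T IH]; simpl; [reflexivity|].
  rewrite (sumR_ext _ (fun _ => c)) by auto. rewrite sumR_const. field; lra.
Qed.

Lemma expect_plus T F G : expect w T (fun ts => F ts + G ts) = expect w T F + expect w T G.
Proof.
  revert F G; induction T as [|T IH]; intros F G; simpl; [reflexivity|].
  rewrite (sumR_ext _ (fun t => expect w T (fun ts => F (shift_cons t ts))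
                              + expect w T (fun ts => G (shift_cons t ts)))) by auto.
  rewrite sumR_plus; ring.
Qed.

Lemma expect_scal T c F : expect w T (fun ts => c * F ts) = c * expect w T F.
Proof.
  revert F; induction T as [|T IH]; intros F; simpl; [reflexivity|].
  rewrite (sumR_ext _ (fun t => c * expect w T (fun ts => F (shift_cons t ts)))) by auto.
  rewrite sumR_scal; ring.
Qed.

Lemma expect_minus T F G : expect w T (fun ts => F ts - G ts) = expect w T F - expect w T G.
Proof.
  rewrite (expect_ext _ _ (fun ts => F ts + -1 * G ts)) by (intros; ring).
  rewrite expect_plus, expect_scal; ring.
Qed.

Lemma expect_sum T (F : nat -> (nat -> nat) -> R) N :
  expect w T (fun ts => sumR (fun k => F k ts) N) = sumR (fun k => expect w T (F k)) N.
Proof. induction N; simpl; [apply expect_const|]. rewrite expect_plus, IHN; reflexivity. Qed.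

Section Drift.
Variables (St : Type) (stepf : nat -> St -> St) (Inv : St -> Prop) (Phi Psi : St -> R).
Hypothesis Inv_step : forall t y, Inv y -> Inv (stepf t y).
Hypothesis drift : forall y, Inv y ->
  1 / INR w * sumR (fun t => Phi (stepf t y)) w <= Phi y - Psi y.

Lemma Inv_trajectory y ts k : Inv y -> Inv (trajectory stepf y ts k).
Proof. intros H; induction k; simpl; auto. Qed.

(* The expectation only sees ts 0, ..., ts (T-1), so the step number k must stay below T. *)
Lemma expect_drift k : forall T y, (k < T)%nat -> Inv y ->
  expect w T (fun ts => Phi (trajectory stepf y ts (S k))) <=
  expect w T (fun ts => Phi (trajectory stepf y ts k) - Psi (trajectory stepf y ts k)).
Proof.
  assert (Hw : 0 < INR w) by (apply lt_0_INR; lia).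
  induction k as [|k IH]; intros [|T] y HT Hy; try lia; rewrite !expect_S; cbv beta.
  - rewrite (sumR_ext (fun t => expect w T (fun ts => Phi (trajectory stepf y (shift_cons t ts) 1)))
                       (fun t => Phi (stepf t y))) by (intros; simpl; apply expect_const).
    rewrite (sumR_ext (fun t => expect w T (fun ts => Phi (trajectory stepf y (shift_cons t ts) 0)
                                                  - Psi (trajectory stepf y (shift_cons t ts) 0)))
                       (fun _ => Phi y - Psi y)) by (intros; simpl; apply expect_const).
    rewrite sumR_const.
    replace (1 / INR w * (INR w * (Phi y - Psi y))) with (Phi y - Psi y) by (field; lra).
    now apply drift.
  - apply Rmult_le_compat_l; [apply Rdiv_le_0_compat; lra|].
    apply sumR_le; intros t _.
    set (y' := stepf t y).
    rewrite (expect_ext _ (fun ts => Phi (trajectory stepf y (shift_cons t ts) (S (S k))))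
                          (fun ts => Phi (trajectory stepf y' ts (S k))))
      by (intros; now rewrite trajectory_shift_cons).
    rewrite (expect_ext _ (fun ts => Phi (trajectory stepf y (shift_cons t ts) (S k))
                                   - Psi (trajectory stepf y (shift_cons t ts) (S k)))
                          (fun ts => Phi (trajectory stepf y' ts k) - Psi (trajectory stepf y' ts k)))
      by (intros; now rewrite trajectory_shift_cons).
    apply IH; [lia|now apply Inv_step].
Qed.

Lemma expect_sum_drift_le y0 T lo : Inv y0 -> (forall y, Inv y -> lo <= Phi y) ->
  sumR (fun k => expect w T (fun ts => Psi (trajectory stepf y0 ts k))) T <= Phi y0 - lo.
Proof.
  intros Hy0 Hlo.
  assert (Htel : forall N, (N <= T)%nat ->
    sumR (fun k => expect w T (fun ts => Psi (trajectory stepf y0 ts k))) N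
      <= Phi y0 - expect w T (fun ts => Phi (trajectory stepf y0 ts N))).
  { induction N as [|N IH]; intros HN; simpl sumR.
    - simpl; rewrite expect_const; lra.
    - assert (H := expect_drift N T y0 ltac:(lia) Hy0). rewrite expect_minus in H.
      assert (IH' := IH ltac:(lia)). lra. }
  assert (lo <= expect w T (fun ts => Phi (trajectory stepf y0 ts T))).
  { rewrite <- (expect_const T lo). apply expect_le; intros; apply Hlo, Inv_trajectory, Hy0. }
  specialize (Htel T (le_n T)). lra.
Qed.

End Drift.
End Expectation.

Definition band (e : R) (t : nat) (v : R) : R :=
  if Rlt_dec (e * 2 ^ t) (Rabs v) then (if Rle_dec (Rabs v) (e * 2 ^ S t) then v else 0) else 0.

Lemma band_cases e t v : band e t v = 0 \/ band e t v = v.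
Proof. unfold band; destruct (Rlt_dec _ _); [destruct (Rle_dec _ _)|]; auto. Qed.

Lemma band_0 e t : band e t 0 = 0.
Proof. now destruct (band_cases e t 0). Qed.

Lemma sum_band_below F e v k : 0 <= e -> e * 2 ^ k < Rabs v ->
  sumR (fun t => F (band e t v)) k = INR k * F 0.
Proof.
  intros He Hv. rewrite <- sumR_const. apply sumR_ext; intros t Ht. unfold band.
  destruct (Rlt_dec _ _); [|reflexivity]. destruct (Rle_dec _ _); [|reflexivity].
  assert (2 ^ S t <= 2 ^ k) by (apply Rle_pow; [lra|lia]). nra.
Qed.

(* Such a v lies in exactly one of the bands (e 2^t, e 2^(t+1)], t < N, and 0 lies in none. *)
Lemma sum_band F e v N : 0 < e -> (v = 0 \/ (e < Rabs v /\ Rabs v <= e * 2 ^ N)) ->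
  sumR (fun t => F (band e t v)) N = F v + (INR N - 1) * F 0.
Proof.
  intros He [->|[Hlo Hhi]].
  - rewrite (sumR_ext _ (fun _ => F 0)) by (intros; now rewrite band_0).
    rewrite sumR_const; ring.
  - induction N as [|N IH]; [simpl in Hhi; lra|]. rewrite sumR_S, S_INR.
    destruct (Rle_dec (Rabs v) (e * 2 ^ N)) as [Hle|Hgt].
    + rewrite IH by exact Hle. unfold band.
      destruct (Rlt_dec _ _); [lra|ring].
    + rewrite sum_band_below by lra. unfold band.
      destruct (Rlt_dec _ _); [|lra]. destruct (Rle_dec _ _); [ring|lra].
Qed.

Lemma ceilZ_ge x : x <= INR (Z.to_nat (ceilZ x)).
Proof.
  unfold ceilZ. destruct (archimed (- x)) as [_ Hup].
  assert (Hc : x <= IZR (1 - up (- x))) by (rewrite minus_IZR; simpl; lra).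
  destruct (Z_le_gt_dec 0 (1 - up (- x))) as [Hnn|Hneg].
  - now rewrite INR_IZR_INZ, Z2Nat.id.
  - replace (Z.to_nat (1 - up (- x))) with 0%nat by lia.
    assert (IZR (1 - up (- x)) < 0) by (apply IZR_lt; lia). simpl; lra.
Qed.

Section Constants.
Variables (m n : nat) (eps : R).
Hypotheses (Hm : (1 <= m)%nat) (Hn : (1 <= n)%nat) (Heps : 0 < eps <= 1 / 2).

Local Notation L := (ln (INR n * INR m / eps)).

Lemma ratio_ge2 : 2 <= INR n * INR m / eps.
Proof.
  apply le_INR in Hm, Hn. simpl in Hm, Hn.
  apply (Rmult_le_reg_r eps); [lra|]. field_simplify; [nra|lra].
Qed.

Lemma log_ratio_ge : 1 / 2 <= L.
Proof. assert (H := ln_lt_2). apply Rle_trans with (ln 2); [lra|]. apply ln_le; [lra|apply ratio_ge2]. Qed.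

Lemma exp_neg_log_ratio : exp (- L) = eps / (INR n * INR m).
Proof.
  assert (H := ratio_ge2). apply le_INR in Hm, Hn. simpl in Hm, Hn.
  rewrite exp_Ropp, exp_ln by lra. field; lra.
Qed.

Lemma mu_pos : 0 < mu m n eps.
Proof. assert (H := log_ratio_ge). unfold mu. apply Rdiv_lt_0_compat; lra. Qed.

Lemma mu_le : mu m n eps <= eps / 2.
Proof.
  assert (H := log_ratio_ge). unfold mu.
  apply (Rmult_le_reg_r (4 * L)); [lra|]. field_simplify; nra.
Qed.

Lemma alpha_pos : 0 < alpha m n eps.
Proof. assert (H := mu_pos). unfold alpha; lra. Qed.

Lemma alpha_le : alpha m n eps <= eps / 40.
Proof. assert (H := mu_le). unfold alpha; lra. Qed.

(* ln (n / mu) <= ln (nm/eps) + ln 4 + ln L <= 2 L + 1, which needs ln 2 <= 1 and L >= 1/2. *)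
Lemma mu_ln_le : mu m n eps * ln (INR n / mu m n eps) <= eps.
Proof.
  assert (HL := log_ratio_ge). assert (Hr := ratio_ge2). assert (Hmu := mu_pos).
  assert (Hn' := le_INR _ _ Hn). assert (Hm' := le_INR _ _ Hm). simpl in Hn', Hm'.
  assert (Hln2 : ln 2 <= 1) by (rewrite <- (ln_exp 1); apply ln_le; [lra|]; 
                                   assert (H := exp_ineq1_le 1); lra).
  assert (Hsplit : INR n / mu m n eps <= (INR n * INR m / eps) * (2 * 2) * L).
  { unfold mu. apply (Rmult_le_reg_r eps); [lra|]. field_simplify; [|lra|lra].
    assert (0 <= 4 * INR n * L) by nra. nra. }
  apply ln_le in Hsplit; [|apply Rdiv_lt_0_compat; lra].
  rewrite !ln_mult in Hsplit by lra.
  assert (ln L <= L - 1) by (apply ln_le_sub1; lra).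
  apply Rle_trans with (mu m n eps * (2 * L + 1)); [apply Rmult_le_compat_l; lra|].
  unfold mu. apply (Rmult_le_reg_r (4 * L)); [lra|]. field_simplify; nra.
Qed.

End Constants.

Arguments log_ratio_ge {m n eps}.
Arguments exp_neg_log_ratio {m n eps}.
Arguments mu_pos {m n eps}.
Arguments mu_le {m n eps}.
Arguments alpha_pos {m n eps}.
Arguments alpha_le {m n eps}.
Arguments mu_ln_le {m n eps}.

Lemma wpar_ge_log2 eps : 0 < eps <= 1 / 2 -> 1 <= log2 (1 / eps) <= INR (wpar eps).
Proof.
  intros Heps. split; [|apply ceilZ_ge]. unfold log2.
  assert (H := ln_lt_2). assert (ln 2 <= ln (1 / eps)).
  { apply ln_le; [lra|]. apply (Rmult_le_reg_r eps); [lra|]. field_simplify; lra. }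
  apply (Rmult_le_reg_r (ln 2)); [lra|]. field_simplify; lra.
Qed.

Lemma wpar_pos eps : 0 < eps <= 1 / 2 -> (0 < wpar eps)%nat.
Proof. intros Heps. destruct (wpar_ge_log2 eps Heps). apply INR_lt; simpl; lra. Qed.

Lemma eps_pow_wpar eps : 0 < eps <= 1 / 2 -> 1 <= eps * 2 ^ wpar eps.
Proof.
  intros Heps. destruct (wpar_ge_log2 eps Heps) as [_ Hw]. unfold log2 in Hw.
  assert (H2 := ln_lt_2). assert (Hp : 0 < 2 ^ wpar eps) by (apply pow_lt; lra).
  assert (Hln : ln (1 / eps) <= ln (2 ^ wpar eps)).
  { rewrite ln_pow by lra. apply (Rmult_le_reg_r (/ ln 2)); [apply Rinv_0_lt_compat; lra|].
    rewrite Rmult_assoc, Rinv_r by lra. unfold Rdiv in Hw. lra. }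
  destruct (Rle_dec (1 / eps) (2 ^ wpar eps)) as [H|H].
  - apply (Rmult_le_reg_l (1 / eps)); [apply Rdiv_lt_0_compat; lra|].
    replace (1 / eps * (eps * 2 ^ wpar eps)) with (2 ^ wpar eps) by (field; lra). lra.
  - assert (ln (2 ^ wpar eps) < ln (1 / eps)) by (apply ln_increasing; lra). lra.
Qed.

Lemma accounting_constant_le eps a : 0 < eps <= 1 / 2 -> 0 <= a <= eps / 40 ->
  (1 + eps + a) * (1 + 4 * eps / 3) + eps / 6 + 2 / 9 * eps * (1 + 4 * eps / 3) + eps ^ 2 / 2
  <= (1 - eps / 4) * (1 + 5 * eps).
Proof. intros Heps Ha. nra. Qed.

Section Algorithm.
Variables (m n : nat) (A : nat -> nat -> R) (eps : R).
Hypothesis HA_nonneg : forall j i, (j < m)%nat -> (i < n)%nat -> 0 <= A j i.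
Hypothesis HA_norm_ge : forall i, (i < n)%nat -> 1 <= colnorm m A i.
Hypothesis HA_norm_eq : exists i, (i < n)%nat /\ colnorm m A i = 1.
Hypothesis Heps : 0 < eps <= 1 / 2.
Variable OPT : R.
Hypothesis HOPT : is_lub (lp_values m n A) OPT.

Local Notation mu := (Defs.mu m n eps).
Local Notation alpha := (Defs.alpha m n eps).
Local Notation w := (wpar eps).
Local Notation L := (ln (INR n * INR m / eps)).
Local Notation p := (pj m n A eps).
Local Notation g := (grad m n A eps).
Local Notation xi := (Defs.xi m n A eps).
Local Notation xit := (Defs.xit m n A eps).
Local Notation step := (Defs.step m n A eps).
Local Notation x0 := (Defs.x0 m n A eps).

Definition objective (x : nat -> R) : R := sumR x n.
Definition psum (x : nat -> R) : R := sumR (p x) m.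
Definition fmu (x : nat -> R) : R := - objective x + mu * psum x.
Definition sum_x_xi (x : nat -> R) : R := sumR (fun i => x i * xi x i) n.
Definition sum_x_xi_grad (x : nat -> R) : R := sumR (fun i => x i * xi x i * g x i) n.
Definition admissible (x : nat -> R) : Prop := (forall i, (i < n)%nat -> 0 < x i) /\ fmu x <= 0.

Lemma n_pos : (1 <= n)%nat.
Proof. destruct HA_norm_eq as [i [Hi _]]; lia. Qed.

Lemma m_pos : (1 <= m)%nat.
Proof.
  destruct HA_norm_eq as [i [_ Hc]]. destruct (Nat.eq_dec m 0) as [Hm0|]; [|lia].
  rewrite Hm0 in Hc. cbv in Hc. lra.
Qed.

Lemma A_le_colnorm j i : (j < m)%nat -> A j i <= colnorm m A i.
Proof. intros Hj. eapply Rle_trans; [apply Rle_abs|]. exact (maxR_ge (fun j => Rabs (A j i)) m j Hj). Qed.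

Lemma colnorm_witness i : (i < n)%nat -> exists j, (j < m)%nat /\ 1 <= A j i.
Proof.
  intros Hi. assert (H := HA_norm_ge i Hi). unfold colnorm in H.
  destruct (maxR_attain (fun j => Rabs (A j i)) m ltac:(lra)) as [j [Hj E]].
  exists j; split; [exact Hj|]. rewrite Rabs_pos_eq in E by auto. lra.
Qed.

Lemma objective_le_OPT y : feasible m n A y -> objective y <= OPT.
Proof. intros Hy. apply (proj1 HOPT). now exists y. Qed.

Lemma OPT_ge1 : 1 <= OPT.
Proof.
  destruct HA_norm_eq as [k [Hk Hc]].
  set (e := fun i => if Nat.eq_dec i k then 1 else 0).
  replace 1 with (objective e) by (apply sumR_indicator; exact Hk).
  apply objective_le_OPT. split.
  - intros i _. unfold e. destruct (Nat.eq_dec i k); lra.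
  - intros j Hj. unfold Ax.
    rewrite (sumR_ext _ (fun i => if Nat.eq_dec i k then A j k else 0))
      by (intros i _; unfold e; destruct (Nat.eq_dec i k) as [->|]; ring).
    rewrite sumR_indicator by exact Hk. rewrite <- Hc. now apply A_le_colnorm.
Qed.

Lemma objective_le_scaled_OPT x c : 0 < c -> (forall i, (i < n)%nat -> 0 <= x i) ->
  (forall j, (j < m)%nat -> Ax n A x j <= c) -> objective x <= c * OPT.
Proof.
  intros Hc Hx HAx.
  assert (H : objective (fun i => x i / c) <= OPT).
  { apply objective_le_OPT. split.
    - intros i Hi. apply Rdiv_le_0_compat; auto.
    - intros j Hj. unfold Ax.
      rewrite (sumR_ext _ (fun i => / c * (A j i * x i))) by (intros; unfold Rdiv; ring).
      rewrite sumR_scal. apply (Rmult_le_reg_l c); [lra|].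
      rewrite <- Rmult_assoc, Rinv_r, Rmult_1_l by lra. rewrite Rmult_1_r. now apply HAx. }
  unfold objective in *. rewrite (sumR_ext _ (fun i => / c * x i)) in H by (intros; unfold Rdiv; ring).
  rewrite sumR_scal in H. apply (Rmult_le_reg_l (/ c)); [apply Rinv_0_lt_compat; lra|].
  rewrite <- Rmult_assoc, Rinv_l, Rmult_1_l by lra. exact H.
Qed.

Lemma p_pos x j : 0 < p x j.
Proof. apply exp_pos. Qed.

Lemma psum_nonneg x : 0 <= psum x.
Proof. apply sumR_nonneg; intros; left; apply p_pos. Qed.

Lemma Ax_eq_ln x j : Ax n A x j = 1 + mu * ln (p x j).
Proof.
  assert (H := mu_pos m_pos n_pos Heps).
  unfold pj. rewrite ln_exp. field; lra.
Qed.

Lemma one_add_grad x i : 1 + g x i = sumR (fun j => A j i * p x j) m.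
Proof. unfold grad; ring. Qed.

Lemma grad_ge x i : (i < n)%nat -> -1 <= g x i.
Proof.
  intros Hi. assert (0 <= sumR (fun j => A j i * p x j) m).
  { apply sumR_nonneg; intros j Hj. apply Rmult_le_pos; [auto|left; apply p_pos]. }
  rewrite <- one_add_grad in *; lra.
Qed.

Lemma xi_cases x i :
  (Rabs (g x i) <= eps /\ xi x i = 0) \/
  (eps < Rabs (g x i) /\ g x i <= 1 /\ xi x i = g x i) \/
  (1 < g x i /\ xi x i = 1).
Proof.
  unfold Defs.xi. destruct (Rle_dec _ _); [left; auto|].
  destruct (Rle_dec _ _); right; [left|right]; repeat split; lra.
Qed.

Lemma xi_range x i : (i < n)%nat -> xi x i = 0 \/ (eps < Rabs (xi x i) /\ Rabs (xi x i) <= 1).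
Proof.
  intros Hi. assert (Hg := grad_ge x i Hi).
  destruct (xi_cases x i) as [[_ ->]|[[H1 [H2 ->]]|[_ ->]]]; [now left|right..].
  - split; [lra|]. apply Rabs_le; lra.
  - rewrite Rabs_R1; lra.
Qed.

Lemma xit_band t x i : xit t x i = band eps t (xi x i).
Proof. reflexivity. Qed.

Lemma sum_xit F x i : (i < n)%nat ->
  sumR (fun t => F (xit t x i)) w = F (xi x i) + (INR w - 1) * F 0.
Proof.
  intros Hi. apply sum_band; [lra|].
  destruct (xi_range x i Hi) as [H|[H1 H2]]; [now left|right].
  split; [lra|]. assert (H := eps_pow_wpar eps Heps). lra.
Qed.

Lemma xit_props t x i : (i < n)%nat ->
  -1 <= xit t x i <= 1 /\ 0 <= xit t x i * g x i /\
  xit t x i ^ 2 * (1 + g x i) <= 2 * (xit t x i * g x i).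
Proof.
  intros Hi. assert (Hg := grad_ge x i Hi). rewrite xit_band.
  destruct (band_cases eps t (xi x i)) as [->| ->]; [repeat split; nra|].
  destruct (xi_cases x i) as [[_ ->]|[[H1 [H2 ->]]|[H1 ->]]]; repeat split; nra.
Qed.

(* With eps/4 = mu L the left side is mu e^(-L) y e^(-y) for y = (1 - eps/4 - (Ax)_j) / mu. *)
Lemma row_slack_le x j : (1 - eps / 4 - Ax n A x j) * p x j <= mu * exp (- L).
Proof.
  assert (Hmu := mu_pos m_pos n_pos Heps). assert (HL := log_ratio_ge m_pos n_pos Heps).
  set (y := (1 - eps / 4 - Ax n A x j) / mu).
  assert (Hp : p x j = exp (- L) * exp (- y)).
  { unfold pj. rewrite <- exp_plus. f_equal. unfold y, Defs.mu. field; lra. }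
  replace (1 - eps / 4 - Ax n A x j) with (mu * y) by (unfold y; field; lra).
  rewrite Hp. assert (H := mul_exp_neg_le1 y). assert (He := exp_pos (- L)).
  replace (mu * y * (exp (- L) * exp (- y))) with ((mu * exp (- L)) * (y * exp (- y))) by ring.
  rewrite <- (Rmult_1_r (mu * exp (- L))) at 2. apply Rmult_le_compat_l; nra.
Qed.

(* Transposing, sum_j p_j (Ax)_j = sum_i x_i (1 + g_i), and 1 + g_i <= 1 + eps + xi_i + xi_i g_i. *)
Lemma psum_le_objective_xi x : (forall i, (i < n)%nat -> 0 <= x i) ->
  (1 - eps / 4) * psum x <= (1 + eps) * objective x + sum_x_xi x + sum_x_xi_grad x + eps ^ 2 / 2.
Proof.
  intros Hx.
  assert (Hrows : (1 - eps / 4) * psum x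
                  <= sumR (fun j => p x j * Ax n A x j) m + INR m * (mu * exp (- L))).
  { unfold psum. rewrite <- sumR_scal, <- sumR_const, <- sumR_plus.
    apply sumR_le; intros j _. assert (H := row_slack_le x j). nra. }
  assert (Herr : INR m * (mu * exp (- L)) <= eps ^ 2 / 2).
  { rewrite (exp_neg_log_ratio m_pos n_pos Heps).
    assert (Hn := le_INR _ _ n_pos). assert (Hm := le_INR _ _ m_pos). simpl in Hn, Hm.
    assert (Hmu := mu_pos m_pos n_pos Heps). assert (Hmu2 := mu_le m_pos n_pos Heps).
    replace (INR m * (mu * (eps / (INR n * INR m)))) with (mu * eps / INR n) by (field; lra).
    apply (Rmult_le_reg_r (INR n)); [lra|]. field_simplify; [|lra]. nra. }
  assert (Hcols : sumR (fun j => p x j * Ax n A x j) m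
                  <= (1 + eps) * objective x + sum_x_xi x + sum_x_xi_grad x).
  { rewrite sumR_mul_Ax. unfold objective, sum_x_xi, sum_x_xi_grad.
    rewrite <- sumR_scal, <- !sumR_plus. apply sumR_le; intros i Hi.
    rewrite <- one_add_grad.
    assert (Hxi := Hx i Hi). assert (Hg := grad_ge x i Hi).
    assert (1 + g x i <= 1 + eps + xi x i + xi x i * g x i).
    { destruct (xi_cases x i) as [[H ->]|[[_ [_ ->]]|[_ ->]]]; [|nra|lra].
      assert (g x i <= Rabs (g x i)) by apply Rle_abs. lra. }
    nra. }
  lra.
Qed.

Lemma objective_pos x : (forall i, (i < n)%nat -> 0 < x i) -> 0 < objective x.
Proof.
  intros Hx. assert (Hn := n_pos). apply Rlt_le_trans with (x 0%nat); [apply Hx; lia|].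
  apply sumR_term_le; [intros; left; apply Hx|]; lia.
Qed.

(* fmu x <= 0 gives p_j <= psum x <= objective x / mu; each x_i is bounded by a row since some
   A_ji >= 1. *)
Lemma admissible_entries_le x : admissible x ->
  (forall j, (j < m)%nat -> Ax n A x j <= 1 + mu * ln (objective x / mu)) /\
  (forall i, (i < n)%nat -> x i <= 1 + mu * ln (objective x / mu)).
Proof.
  intros [Hx Hf]. assert (HX := objective_pos x Hx). assert (Hmu := mu_pos m_pos n_pos Heps).
  assert (HAx : forall j, (j < m)%nat -> Ax n A x j <= 1 + mu * ln (objective x / mu)).
  { intros j Hj. rewrite Ax_eq_ln. apply Rplus_le_compat_l, Rmult_le_compat_l; [lra|].
    apply ln_le; [apply p_pos|].
    assert (p x j <= psum x) by (apply sumR_term_le; auto; intros; left; apply p_pos).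
    unfold fmu in Hf. apply (Rmult_le_reg_l mu); [lra|]. field_simplify; [nra|lra]. }
  split; [exact HAx|]. intros i Hi.
  destruct (colnorm_witness i Hi) as [j [Hj HA]].
  apply Rle_trans with (Ax n A x j); [|now apply HAx].
  apply Rle_trans with (A j i * x i); [assert (0 < x i) by auto; nra|].
  apply (sumR_term_le (fun i => A j i * x i)); [|exact Hi].
  intros k Hk. apply Rmult_le_pos; [auto|left; auto].
Qed.

Lemma log_fixed_point_le K mu' eps' Y : 0 < mu' <= 1 / 4 -> 0 <= eps' -> K <= eps' -> 0 < Y ->
  Y <= 1 + K + mu' * ln Y -> 1 + K + mu' * ln Y <= 1 + 4 * eps' / 3.
Proof.
  intros Hmu Heps' HK HY Hfix. assert (Hln := ln_le_sub1 Y HY).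
  assert (mu' * ln Y <= mu' * (Y - 1)) by (apply Rmult_le_compat_l; lra).
  destruct (Rle_dec Y 1); [nra|].
  assert (Hz : (Y - 1) * (1 - mu') <= K) by nra.
  assert (3 * mu' * (Y - 1) <= K) by nra. nra.
Qed.

Lemma admissible_Ax_le x : admissible x -> forall j, (j < m)%nat -> Ax n A x j <= 1 + 4 * eps / 3.
Proof.
  intros Hadm. destruct (admissible_entries_le x Hadm) as [HAx Hxi].
  assert (HX := objective_pos x (proj1 Hadm)).
  assert (Hmu := mu_pos m_pos n_pos Heps). assert (Hmu2 := mu_le m_pos n_pos Heps).
  assert (Hn := le_INR _ _ n_pos). simpl in Hn.
  set (Y := objective x / INR n).
  assert (HR : 1 + mu * ln (objective x / mu) = 1 + mu * ln (INR n / mu) + mu * ln Y).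
  { rewrite Rplus_assoc, <- Rmult_plus_distr_l, <- ln_mult
      by (unfold Y; apply Rdiv_lt_0_compat; lra).
    do 3 f_equal. unfold Y; field; lra. }
  assert (Hfix : 1 + mu * ln (INR n / mu) + mu * ln Y <= 1 + 4 * eps / 3).
  { apply log_fixed_point_le; [lra|lra|apply (mu_ln_le m_pos n_pos Heps)|unfold Y; apply Rdiv_lt_0_compat; lra|].
    rewrite <- HR. apply (Rmult_le_reg_r (INR n)); [lra|].
    replace (Y * INR n) with (objective x) by (unfold Y; field; lra).
    rewrite Rmult_comm, <- sumR_const. now apply sumR_le. }
  intros j Hj. rewrite <- HR in Hfix. specialize (HAx j Hj). lra.
Qed.

Lemma admissible_objective_le x : admissible x -> objective x <= (1 + 4 * eps / 3) * OPT.
Proof.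
  intros Hadm. apply objective_le_scaled_OPT; [lra| |now apply admissible_Ax_le].
  intros i Hi; left; now apply (proj1 Hadm).
Qed.

Lemma x0_pos i : (i < n)%nat -> 0 < x0 i.
Proof.
  intros Hi. assert (H := HA_norm_ge i Hi). assert (Hn := le_INR _ _ n_pos). simpl in Hn.
  unfold Defs.x0. apply Rdiv_lt_0_compat; nra.
Qed.

Lemma Ax_x0_le j : (j < m)%nat -> Ax n A x0 j <= 1 - eps / 2.
Proof.
  intros Hj. assert (Hn := le_INR _ _ n_pos). simpl in Hn.
  apply Rle_trans with (sumR (fun _ => (1 - eps / 2) / INR n) n).
  - apply sumR_le; intros i Hi. unfold Defs.x0.
    assert (H := HA_norm_ge i Hi). assert (H2 := A_le_colnorm j i Hj).
    assert (H3 := HA_nonneg j i Hj Hi).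
    replace (A j i * ((1 - eps / 2) / (INR n * colnorm m A i)))
      with (A j i / colnorm m A i * ((1 - eps / 2) / INR n)) by (field; lra).
    rewrite <- (Rmult_1_l ((1 - eps / 2) / INR n)) at 2.
    apply Rmult_le_compat_r; [apply Rdiv_le_0_compat; lra|].
    apply (Rmult_le_reg_r (colnorm m A i)); [lra|]. field_simplify; lra.
  - rewrite sumR_const. right; field; lra.
Qed.

Lemma objective_x0_le : objective x0 <= OPT.
Proof.
  apply objective_le_OPT. split; [intros; left; now apply x0_pos|].
  intros j Hj. assert (H := Ax_x0_le j Hj). lra.
Qed.

(* Each p_j(x0) <= exp (-2L) = (eps/(nm))^2, while the column of norm 1 alone gives objective x0
   >= (1 - eps/2)/n. *)
Lemma fmu_x0_le : fmu x0 <= 0.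
Proof.
  unfold fmu. destruct HA_norm_eq as [k [Hk Hc]].
  assert (Hn := le_INR _ _ n_pos). assert (Hm := le_INR _ _ m_pos). simpl in Hn, Hm.
  assert (Hmu := mu_pos m_pos n_pos Heps). assert (Hmu2 := mu_le m_pos n_pos Heps).
  assert (HL := log_ratio_ge m_pos n_pos Heps).
  assert (HX : (1 - eps / 2) / INR n <= objective x0).
  { apply Rle_trans with (x0 k); [unfold Defs.x0; rewrite Hc, Rmult_1_r; lra|].
    apply sumR_term_le; [intros; left; now apply x0_pos|exact Hk]. }
  assert (HP : psum x0 <= INR m * (exp (- L) * exp (- L))).
  { unfold psum. rewrite <- sumR_const. apply sumR_le; intros j Hj.
    rewrite <- exp_plus. apply exp_le_exp. assert (H := Ax_x0_le j Hj).
    apply Rle_trans with (1 / mu * (- (eps / 2)));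
      [apply Rmult_le_compat_l; [left; apply Rdiv_lt_0_compat|]; lra|].
    right. unfold Defs.mu. field. lra. }
  rewrite (exp_neg_log_ratio m_pos n_pos Heps) in HP.
  assert (mu * psum x0 <= (1 - eps / 2) / INR n).
  { apply Rle_trans with (mu * (INR m * (eps / (INR n * INR m) * (eps / (INR n * INR m)))));
      [apply Rmult_le_compat_l; lra|].
    apply (Rmult_le_reg_r (INR n)); [lra|].
    replace (mu * (INR m * (eps / (INR n * INR m) * (eps / (INR n * INR m)))) * INR n)
      with (mu * eps ^ 2 * / (INR n * INR m)) by (field; lra).
    replace ((1 - eps / 2) / INR n * INR n) with (1 - eps / 2) by (field; lra).
    assert (/ (INR n * INR m) <= 1)
      by (rewrite <- Rinv_1; apply Rinv_le_contravar; nra).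
    assert (0 <= mu * eps ^ 2 <= 1 / 16) by (split; nra). nra. }
  lra.
Qed.

Definition dlt (t : nat) (x : nat -> R) (i : nat) : R := exp (- alpha * xit t x i) - 1.

Lemma step_eq t x i : step t x i = x i * (1 + dlt t x i).
Proof. unfold Defs.step, dlt; ring. Qed.

Lemma dlt_bounds t x i : (i < n)%nat ->
  - (alpha * xit t x i) <= dlt t x i <= - (alpha * xit t x i) + alpha ^ 2 * xit t x i ^ 2.
Proof.
  intros Hi. destruct (xit_props t x i Hi) as [Hv _].
  assert (Ha := alpha_pos m_pos n_pos Heps). assert (Ha2 := alpha_le m_pos n_pos Heps).
  unfold dlt. split.
  - assert (H := exp_ineq1_le (- alpha * xit t x i)). lra.
  - assert (H := exp_le_quad (- alpha * xit t x i) ltac:(nra)). nra.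
Qed.

Lemma p_step t x j : p (step t x) j = p x j * exp (Ax n A (fun i => x i * dlt t x i) j / mu).
Proof.
  assert (Hmu := mu_pos m_pos n_pos Heps).
  assert (HAx : Ax n A (step t x) j = Ax n A x j + Ax n A (fun i => x i * dlt t x i) j).
  { unfold Ax. rewrite <- sumR_plus. apply sumR_ext; intros. rewrite step_eq; ring. }
  unfold pj. rewrite HAx, <- exp_plus. f_equal. field; lra.
Qed.

(* The per-coordinate descent estimate, where v is the step direction, g the gradient and
   d = exp (- a v) - 1 the relative change of the coordinate. *)
Lemma coord_descent a v g d : 0 < a <= 1 / 80 -> -1 <= v <= 1 -> 0 <= v * g ->
  v ^ 2 * (1 + g) <= 2 * (v * g) -> 0 <= 1 + g ->
  - (a * v) <= d <= - (a * v) + a ^ 2 * v ^ 2 ->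
  d * g + 1 / (12 * a) * (d ^ 2 * (1 + g)) <= - (3 / 4) * a * (v * g).
Proof.
  intros Ha Hv Hvg Hv2 Hg [Hd1 Hd2].
  assert (Hlin : d * g <= - (a * v * g) + a ^ 2 * (v * g)).
  { destruct (Rle_dec 0 g) as [Hg0|Hg0].
    - assert (d * g <= (- (a * v) + a ^ 2 * v ^ 2) * g) by (apply Rmult_le_compat_r; auto).
      assert (v ^ 2 * g <= v * g) by (destruct (Rle_dec 0 v); nra). nra.
    - assert (v <= 0) by nra. nra. }
  assert (Hsq : d ^ 2 <= (a * (1 + a)) ^ 2 * v ^ 2).
  { assert (Hd : - (a * (1 + a) * Rabs v) <= d <= a * (1 + a) * Rabs v).
    { destruct (Rle_dec 0 v); [rewrite Rabs_pos_eq by lra|rewrite Rabs_left by lra].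
      - assert (a ^ 2 * v ^ 2 <= a ^ 2 * v) by (apply Rmult_le_compat_l; nra). split; nra.
      - assert (a ^ 2 * v ^ 2 <= a ^ 2 * - v) by (apply Rmult_le_compat_l; nra). split; nra. }
    rewrite <- (pow2_abs v), <- Rpow_mult_distr.
    assert (0 <= a * (1 + a) * Rabs v) by (assert (H := Rabs_pos v); nra). nra. }
  assert (Hquad : 1 / (12 * a) * (d ^ 2 * (1 + g)) <= a * (1 + a) ^ 2 / 6 * (v * g)).
  { apply Rle_trans with (1 / (12 * a) * ((a * (1 + a)) ^ 2 * (2 * (v * g)))).
    - apply Rmult_le_compat_l; [left; apply Rdiv_lt_0_compat; lra|].
      apply Rle_trans with ((a * (1 + a)) ^ 2 * v ^ 2 * (1 + g)); [apply Rmult_le_compat_r; lra|].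
      rewrite Rmult_assoc. apply Rmult_le_compat_l; [apply pow2_ge_0|lra].
    - right; field; lra. }
  assert (a * (a + (1 + a) ^ 2 / 6) * (v * g) <= a * (1 / 4) * (v * g))
    by (apply Rmult_le_compat_r; [|apply Rmult_le_compat_l]; nra).
  nra.
Qed.

Lemma Ax_change_le t x j : admissible x -> (j < m)%nat ->
  Ax n A (fun i => x i * dlt t x i) j <= mu / 4.
Proof.
  intros Hadm Hj. assert (HAx := admissible_Ax_le x Hadm j Hj). destruct Hadm as [Hx _].
  assert (Ha := alpha_pos m_pos n_pos Heps). assert (Ha2 := alpha_le m_pos n_pos Heps).
  apply Rle_trans with (2 * alpha * Ax n A x j).
  - unfold Ax. rewrite <- sumR_scal. apply sumR_le; intros i Hi.
    destruct (dlt_bounds t x i Hi). destruct (xit_props t x i Hi) as [Hv _].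
    assert (alpha ^ 2 * xit t x i ^ 2 <= alpha ^ 2 * 1) by (apply Rmult_le_compat_l; nra).
    assert (dlt t x i <= 2 * alpha) by nra.
    assert (0 <= A j i * x i) by (apply Rmult_le_pos; [auto|left; auto]).
    rewrite <- Rmult_assoc. nra.
  - assert (alpha * Ax n A x j <= alpha * (5 / 3)) by (apply Rmult_le_compat_l; lra).
    unfold Defs.alpha in *. lra.
Qed.

Lemma Ax_change_sq_le t x j : admissible x -> (j < m)%nat ->
  Ax n A (fun i => x i * dlt t x i) j ^ 2 <= 5 / 3 * Ax n A (fun i => x i * dlt t x i ^ 2) j.
Proof.
  intros Hadm Hj. assert (HAx := admissible_Ax_le x Hadm j Hj). destruct Hadm as [Hx _].
  assert (Hw : forall i, (i < n)%nat -> 0 <= A j i * x i)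
    by (intros; apply Rmult_le_pos; [auto|left; auto]).
  unfold Ax in *.
  rewrite (sumR_ext _ (fun i => A j i * x i * dlt t x i)) by (intros; ring).
  rewrite (sumR_ext (fun i => A j i * (x i * dlt t x i ^ 2))
                    (fun i => A j i * x i * dlt t x i ^ 2)) by (intros; ring).
  eapply Rle_trans; [apply sumR_sq_le; exact Hw|].
  apply Rmult_le_compat_r; [|lra].
  apply sumR_nonneg; intros; apply Rmult_le_pos; [auto|apply pow2_ge_0].
Qed.

(* Row by row exp_increment_le applies with D the change of (Ax)_j, and mu = 20 alpha turns
   5/(3 mu) into 1/(12 alpha). *)
Lemma psum_step_le t x : admissible x ->
  mu * (psum (step t x) - psum x) <=
  sumR (fun i => x i * dlt t x i * (1 + g x i)) n
  + 1 / (12 * alpha) * sumR (fun i => x i * dlt t x i ^ 2 * (1 + g x i)) n.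
Proof.
  intros Hadm. assert (Hmu := mu_pos m_pos n_pos Heps).
  set (D := fun j => Ax n A (fun i => x i * dlt t x i) j).
  set (D2 := fun j => Ax n A (fun i => x i * dlt t x i ^ 2) j).
  assert (Hrow : forall j, (j < m)%nat ->
    mu * (p x j * exp (D j / mu) - p x j) <= p x j * D j + 5 / 3 / mu * (p x j * D2 j)).
  { intros j Hj. apply exp_increment_le; [left; apply p_pos|exact Hmu| |].
    - now apply Ax_change_le.
    - now apply Ax_change_sq_le. }
  unfold psum. rewrite <- sumR_minus, <- sumR_scal.
  rewrite (sumR_ext _ (fun j => mu * (p x j * exp (D j / mu) - p x j))) by (intros; now rewrite p_step).
  eapply Rle_trans; [apply sumR_le; exact Hrow|].
  rewrite sumR_plus, sumR_scal. unfold D, D2. rewrite !sumR_mul_Ax.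
  replace (5 / 3 / mu) with (1 / (12 * alpha)) by (unfold Defs.alpha; field; lra).
  right. f_equal; [|f_equal]; apply sumR_ext; intros i _; rewrite one_add_grad; ring.
Qed.

Lemma fmu_step_le t x : admissible x ->
  fmu (step t x) <= fmu x - 3 / 4 * alpha * sumR (fun i => x i * xit t x i * g x i) n.
Proof.
  intros Hadm. assert (HP := psum_step_le t x Hadm). destruct Hadm as [Hx _].
  assert (Ha := alpha_pos m_pos n_pos Heps). assert (Ha2 := alpha_le m_pos n_pos Heps).
  assert (Hobj : objective (step t x) = objective x + sumR (fun i => x i * dlt t x i) n).
  { unfold objective. rewrite <- sumR_plus. apply sumR_ext; intros. rewrite step_eq; ring. }
  assert (Hcoord : sumR (fun i => x i * dlt t x i * g x i
                                  + 1 / (12 * alpha) * (x i * dlt t x i ^ 2 * (1 + g x i))) n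
                   <= - (3 / 4) * alpha * sumR (fun i => x i * xit t x i * g x i) n).
  { rewrite <- sumR_scal. apply sumR_le; intros i Hi.
    destruct (xit_props t x i Hi) as [Hv [Hvg Hv2]]. assert (Hg := grad_ge x i Hi).
    assert (H := coord_descent alpha (xit t x i) (g x i) (dlt t x i) ltac:(lra) Hv Hvg Hv2
                   ltac:(lra) (dlt_bounds t x i Hi)).
    assert (Hxi := Hx i Hi). 
    replace (x i * dlt t x i * g x i + 1 / (12 * alpha) * (x i * dlt t x i ^ 2 * (1 + g x i)))
      with (x i * (dlt t x i * g x i + 1 / (12 * alpha) * (dlt t x i ^ 2 * (1 + g x i)))) by ring.
    replace (- (3 / 4) * alpha * (x i * xit t x i * g x i))
      with (x i * (- (3 / 4) * alpha * (xit t x i * g x i))) by ring.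
    apply Rmult_le_compat_l; lra. }
  rewrite sumR_plus, sumR_scal in Hcoord.
  assert (sumR (fun i => x i * dlt t x i * (1 + g x i)) n
          = sumR (fun i => x i * dlt t x i) n + sumR (fun i => x i * dlt t x i * g x i) n)
    by (rewrite <- sumR_plus; apply sumR_ext; intros; ring).
  unfold fmu. rewrite Hobj. lra.
Qed.

Lemma admissible_step t x : admissible x -> admissible (step t x).
Proof.
  intros Hadm. assert (H := fmu_step_le t x Hadm). destruct Hadm as [Hx Hf]. split.
  - intros i Hi. unfold Defs.step. apply Rmult_lt_0_compat; [auto|apply exp_pos].
  - assert (0 <= sumR (fun i => x i * xit t x i * g x i) n).
    { apply sumR_nonneg; intros i Hi. destruct (xit_props t x i Hi) as [_ [Hvg _]].
      rewrite Rmult_assoc. apply Rmult_le_pos; [left; auto|lra]. }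
    assert (Ha := alpha_pos m_pos n_pos Heps). nra.
Qed.

Lemma fmu_drift x : admissible x ->
  1 / INR w * sumR (fun t => fmu (step t x)) w <= fmu x - 3 * alpha / (4 * INR w) * sum_x_xi_grad x.
Proof.
  intros Hadm. assert (Hw := lt_0_INR _ (wpar_pos eps Heps)).
  assert (H : sumR (fun t => fmu (step t x)) w
              <= sumR (fun t => fmu x - 3 / 4 * alpha * sumR (fun i => x i * xit t x i * g x i) n) w)
    by (apply sumR_le; intros; now apply fmu_step_le).
  rewrite sumR_minus, sumR_const, sumR_scal, sumR_swap in H. cbv beta in H.
  rewrite (sumR_ext (fun i => sumR (fun t => x i * xit t x i * g x i) w)
                    (fun i => x i * xi x i * g x i)) in H
    by (intros i Hi; etransitivity; [exact (sum_xit (fun v => x i * v * g x i) x i Hi)|];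
        cbv beta; ring).
  fold (sum_x_xi_grad x) in H.
  apply (Rmult_le_reg_l (INR w)); [lra|]. field_simplify; [|lra|lra]. lra.
Qed.

Lemma objective_drift x : admissible x ->
  1 / INR w * sumR (fun t => objective (step t x)) w
  <= objective x - alpha / INR w * (sum_x_xi x - alpha * objective x).
Proof.
  intros [Hx _]. assert (Hw := lt_0_INR _ (wpar_pos eps Heps)).
  assert (Ha := alpha_pos m_pos n_pos Heps). assert (Ha2 := alpha_le m_pos n_pos Heps).
  assert (H : sumR (fun t => objective (step t x)) w
              = sumR (fun i => x i * (exp (- alpha * xi x i) + (INR w - 1))) n).
  { unfold objective. rewrite sumR_swap. apply sumR_ext; intros i Hi.
    rewrite (sumR_ext _ (fun t => x i * exp (- alpha * xit t x i))) by reflexivity.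
    rewrite sumR_scal. f_equal.
    etransitivity; [exact (sum_xit (fun v => exp (- alpha * v)) x i Hi)|].
    cbv beta. rewrite Rmult_0_r, exp_0; ring. }
  assert (Hle : sumR (fun i => x i * (exp (- alpha * xi x i) + (INR w - 1))) n
                <= sumR (fun i => INR w * x i - alpha * (x i * xi x i) + alpha ^ 2 * x i) n).
  { apply sumR_le; intros i Hi. assert (Hxi := Hx i Hi).
    assert (Hv : -1 <= xi x i <= 1).
    { destruct (xi_range x i Hi) as [->|[_ Hv]]; [lra|]. unfold Rabs in Hv; destruct (Rcase_abs _); lra. }
    assert (He := exp_le_quad (- alpha * xi x i) ltac:(nra)).
    assert (alpha ^ 2 * xi x i ^ 2 <= alpha ^ 2) by (rewrite <- (Rmult_1_r (alpha ^ 2)) at 2;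
                                                   apply Rmult_le_compat_l; nra).
    assert (x i * (exp (- alpha * xi x i) + (INR w - 1)) <= x i * (INR w - alpha * xi x i + alpha ^ 2))
      by (apply Rmult_le_compat_l; lra).
    nra. }
  rewrite H. rewrite !sumR_plus, sumR_minus, !sumR_scal in Hle.
  fold (objective x) (sum_x_xi x) in Hle.
  apply (Rmult_le_reg_l (INR w)); [lra|]. field_simplify; [|lra|lra]. lra.
Qed.

Lemma w_pos : (0 < w)%nat.
Proof. exact (wpar_pos eps Heps). Qed.

Lemma admissible_x0 : admissible x0.
Proof. split; [exact x0_pos|exact fmu_x0_le]. Qed.

Lemma admissible_trajectory ts k : admissible (trajectory step x0 ts k).
Proof. apply Inv_trajectory; [exact admissible_step|exact admissible_x0]. Qed.

Definition expected_sum (F : (nat -> R) -> R) (T : nat) : R :=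
  sumR (fun k => expect w T (fun ts => F (trajectory step x0 ts k))) T.

Lemma expected_sum_le F G T : (forall x, admissible x -> F x <= G x) ->
  expected_sum F T <= expected_sum G T.
Proof.
  intros H. apply sumR_le; intros k _. apply (expect_le _ w_pos); intros ts.
  apply H, admissible_trajectory.
Qed.

Lemma expected_sum_plus F G T :
  expected_sum (fun x => F x + G x) T = expected_sum F T + expected_sum G T.
Proof.
  unfold expected_sum. rewrite <- sumR_plus. apply sumR_ext; intros.
  apply expect_plus.
Qed.

Lemma expected_sum_scal c F T : expected_sum (fun x => c * F x) T = c * expected_sum F T.
Proof.
  unfold expected_sum. rewrite <- sumR_scal. apply sumR_ext; intros.
  apply expect_scal.
Qed.

Lemma expected_sum_minus F G T :
  expected_sum (fun x => F x - G x) T = expected_sum F T - expected_sum G T.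
Proof.
  unfold expected_sum. rewrite <- sumR_minus. apply sumR_ext; intros.
  apply expect_minus.
Qed.

Lemma expected_sum_const c T : expected_sum (fun _ => c) T = INR T * c.
Proof.
  unfold expected_sum. rewrite <- sumR_const. apply sumR_ext; intros.
  apply (expect_const _ w_pos).
Qed.

Lemma expected_sum_objective_le T :
  expected_sum objective T <= INR T * ((1 + 4 * eps / 3) * OPT).
Proof.
  rewrite <- expected_sum_const. apply expected_sum_le. exact admissible_objective_le.
Qed.

Lemma expected_sum_xi_grad_le T :
  3 * alpha / (4 * INR w) * expected_sum sum_x_xi_grad T <= (1 + 4 * eps / 3) * OPT.
Proof.
  rewrite <- expected_sum_scal.
  assert (Hlo : forall x, admissible x -> - ((1 + 4 * eps / 3) * OPT) <= fmu x).
  { intros x Hx. assert (H := admissible_objective_le x Hx).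
    assert (0 <= mu * psum x)
      by (apply Rmult_le_pos; [left; exact (mu_pos m_pos n_pos Heps)|apply psum_nonneg]).
    unfold fmu; lra. }
  assert (H := expect_sum_drift_le w w_pos _ step admissible fmu _ admissible_step fmu_drift
                 x0 T _ admissible_x0 Hlo).
  assert (H0 := fmu_x0_le). unfold expected_sum. lra.
Qed.

Lemma expected_sum_xi_le T :
  alpha / INR w * (expected_sum sum_x_xi T - alpha * expected_sum objective T) <= OPT.
Proof.
  rewrite <- expected_sum_scal, <- expected_sum_minus, <- expected_sum_scal.
  assert (Hlo : forall x, admissible x -> 0 <= objective x)
    by (intros x Hx; left; exact (objective_pos x (proj1 Hx))).
  assert (H := expect_sum_drift_le w w_pos _ step admissible objective _ admissible_step
                 objective_drift x0 T _ admissible_x0 Hlo).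
  assert (H0 := objective_x0_le). unfold expected_sum. lra.
Qed.

Lemma expected_sum_psum_le_objective_xi T :
  (1 - eps / 4) * expected_sum psum T <=
  (1 + eps) * expected_sum objective T + expected_sum sum_x_xi T + expected_sum sum_x_xi_grad T
  + INR T * (eps ^ 2 / 2).
Proof.
  rewrite <- expected_sum_scal, <- expected_sum_const, <- expected_sum_scal, <- !expected_sum_plus.
  apply expected_sum_le. intros x [Hx _]. apply psum_le_objective_xi. intros i Hi; left; auto.
Qed.

Lemma expected_sum_psum_le T : INR w / alpha <= INR T * eps / 6 ->
  expected_sum psum T <= INR T * ((1 + 5 * eps) * OPT).
Proof.
  intros HT. assert (Hw := lt_0_INR _ w_pos). assert (HO := OPT_ge1).
  assert (Ha := alpha_pos m_pos n_pos Heps). assert (Ha2 := alpha_le m_pos n_pos Heps).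
  assert (HT0 : 0 <= INR T) by apply pos_INR.
  assert (HP := expected_sum_psum_le_objective_xi T). assert (HX := expected_sum_objective_le T).
  assert (HQ := expected_sum_xi_grad_le T). assert (HS := expected_sum_xi_le T).
  set (b := 1 + 4 * eps / 3) in *. set (r := INR w / alpha) in *.
  set (SP := expected_sum psum T) in *. set (SX := expected_sum objective T) in *.
  set (SS := expected_sum sum_x_xi T) in *. set (SQ := expected_sum sum_x_xi_grad T) in *.
  assert (Hr : 0 < r) by (unfold r; apply Rdiv_lt_0_compat; lra).
  assert (HSQ : SQ <= 4 / 3 * r * (b * OPT)).
  { replace SQ with (4 / 3 * r * (3 * alpha / (4 * INR w) * SQ)) by (unfold r; field; lra).
    apply Rmult_le_compat_l; lra. }
  assert (HSS : SS <= r * OPT + alpha * SX).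
  { assert (SS - alpha * SX <= r * OPT); [|lra].
    replace (SS - alpha * SX) with (r * (alpha / INR w * (SS - alpha * SX))) by (unfold r; field; lra).
    apply Rmult_le_compat_l; lra. }
  assert (HbO : 0 <= b * OPT) by (unfold b; nra).
  assert (Hsum : (1 - eps / 4) * SP <=
                 INR T * (((1 + eps + alpha) * b + eps / 6 + 2 / 9 * eps * b) * OPT + eps ^ 2 / 2)).
  { assert (r * OPT <= INR T * eps / 6 * OPT) by (apply Rmult_le_compat_r; lra).
    assert (4 / 3 * r * (b * OPT) <= 4 / 3 * (INR T * eps / 6) * (b * OPT))
      by (apply Rmult_le_compat_r; lra).
    assert ((1 + eps + alpha) * SX <= (1 + eps + alpha) * (INR T * (b * OPT)))
      by (apply Rmult_le_compat_l; lra).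
    lra. }
  assert (Hconst : ((1 + eps + alpha) * b + eps / 6 + 2 / 9 * eps * b) * OPT + eps ^ 2 / 2
                   <= (1 - eps / 4) * ((1 + 5 * eps) * OPT)).
  { assert (Hc := accounting_constant_le eps alpha Heps (conj (Rlt_le _ _ Ha) Ha2)). fold b in Hc.
    assert (eps ^ 2 / 2 <= eps ^ 2 / 2 * OPT) by nra. nra. }
  apply (Rmult_le_reg_l (1 - eps / 4)); [lra|].
  apply Rle_trans with (1 := Hsum).
  replace ((1 - eps / 4) * (INR T * ((1 + 5 * eps) * OPT)))
    with (INR T * ((1 - eps / 4) * ((1 + 5 * eps) * OPT))) by ring.
  apply Rmult_le_compat_l; lra.
Qed.

Lemma expect_ones_ybar T :
  expect w T (ones_ybar m n A eps T) = 1 / INR T * expected_sum psum T.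
Proof.
  unfold ones_ybar. rewrite expect_scal. f_equal.
  rewrite (expect_sum _ w_pos T (fun k ts => psum (iterate m n A eps ts k))).
  apply sumR_ext; intros k _. apply expect_ext; intros ts. f_equal.
  induction k as [|k IH]; simpl; [reflexivity|now rewrite IH].
Qed.

End Algorithm.

Theorem lemma4p1 (m n : nat) (A : nat -> nat -> R) (eps : R)
  (HA_nonneg : forall j i, (j < m)%nat -> (i < n)%nat -> 0 <= A j i)
  (HA_nozero : forall i, (i < n)%nat -> exists j, (j < m)%nat /\ A j i <> 0)
  (HA_norm_ge : forall i, (i < n)%nat -> 1 <= colnorm m A i)
  (HA_norm_eq : exists i, (i < n)%nat /\ colnorm m A i = 1)
  (Heps : 0 < eps <= 1 / 2)
  (OPT : R) (HOPT : is_lub (lp_values m n A) OPT)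
  (T : nat)
  (HT : INR T >= 6 * INR (wpar eps) / (alpha m n eps * eps)) :
  expect (wpar eps) T (ones_ybar m n A eps T) <= (1 + 5 * eps) * OPT.
Proof.
  (* HA_nozero is implied by HA_norm_ge. *)
  assert (Hm := m_pos m n A HA_norm_eq). assert (Hn := n_pos m n A HA_norm_eq).
  assert (Ha := alpha_pos Hm Hn Heps).
  assert (Hw := lt_0_INR _ (wpar_pos eps Heps)).
  assert (HT0 : 0 < INR T) by (apply Rlt_le_trans with (2 := Rge_le _ _ HT);
                               apply Rdiv_lt_0_compat; nra).
  assert (HTw : INR (wpar eps) / alpha m n eps <= INR T * eps / 6).
  { apply (Rmult_le_reg_r (6 / eps)); [apply Rdiv_lt_0_compat; lra|].
    replace (INR T * eps / 6 * (6 / eps)) with (INR T) by (field; lra).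
    replace (INR (wpar eps) / alpha m n eps * (6 / eps))
      with (6 * INR (wpar eps) / (alpha m n eps * eps)) by (field; lra). lra. }
  rewrite (expect_ones_ybar m n A eps Heps).
  assert (H := expected_sum_psum_le m n A eps HA_nonneg HA_norm_ge HA_norm_eq Heps OPT HOPT T HTw).
  apply (Rmult_le_reg_l (INR T)); [exact HT0|].
  field_simplify; lra.
Qed.
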